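(* Let $T$ be the theory of structures $(X,R,f)$ where $R$ is a reflexive and transitive binary relation and $f$ is a unary operation which strictly preserves $R$, namely, for all $d,e$: if $d\,R\,e$ and $d\neq e$, then $f(d)\,R\,f(e)$ and $f(d)\neq f(e)$. Then $T$ does not have the amalgamation property.
   Context: A theory has the amalgamation property (AP) if whenever $\mathbf{A},\mathbf{B},\mathbf{C}$ are models with $\mathbf{C}\subseteq\mathbf{A}$, $\mathbf{C}\subseteq\mathbf{B}$ and $C=A\cap B$, there are a model $\mathbf{D}$ and embeddings of $\mathbf{A}$ and $\mathbf{B}$ into $\mathbf{D}$ which agree on $C$. *)

Record Tmodel := {
  carrier :> Type;
  rel : carrier -> carrier -> Prop;
  op : carrier -> carrier;
  rel_refl : forall x, rel x x;
  rel_trans : forall x y z, rel x y -> rel y z -> rel x z;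
  op_strict : forall d e, rel d e -> d <> e -> rel (op d) (op e) /\ op d <> op e
}.

(* A model of T whose universe is a subset [dom] of an ambient type U, so that
   set-theoretic inclusion and intersection of universes make sense. *)
Record Tsubmodel (U : Type) := {
  dom : U -> Prop;
  srel : U -> U -> Prop;
  sop : U -> U;
  sop_closed : forall x, dom x -> dom (sop x);
  srel_refl : forall x, dom x -> srel x x;
  srel_trans : forall x y z, dom x -> dom y -> dom z ->
      srel x y -> srel y z -> srel x z;
  sop_strict : forall d e, dom d -> dom e -> srel d e -> d <> e ->
      srel (sop d) (sop e) /\ sop d <> sop e
}.
Arguments dom {U} _ _.
Arguments srel {U} _ _ _.
Arguments sop {U} _ _.

Definition substructure {U : Type} (C A : Tsubmodel U) : Prop :=
  (forall x, dom C x -> dom A x) /\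
  (forall x y, dom C x -> dom C y -> (srel C x y <-> srel A x y)) /\
  (forall x, dom C x -> sop C x = sop A x).

Definition embedding {U : Type} (A : Tsubmodel U) (D : Tmodel) (g : U -> D) : Prop :=
  (forall x y, dom A x -> dom A y -> g x = g y -> x = y) /\
  (forall x y, dom A x -> dom A y -> (srel A x y <-> rel D (g x) (g y))) /\
  (forall x, dom A x -> g (sop A x) = op D (g x)).

Definition amalgamation_property : Prop :=
  forall (U : Type) (A B C : Tsubmodel U),
    substructure C A -> substructure C B ->
    (forall x, dom C x <-> (dom A x /\ dom B x)) ->
    exists (D : Tmodel) (g h : U -> D),
      embedding A D g /\ embedding B D h /\
      (forall x, dom C x -> g x = h x).

(* In an amalgam D of the models A and B below, a R c in A and c R b in B give
   a R b in D, and a <> b there because c R a fails in A.  Strict preservation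
   then forces f(a) <> f(b) in D, whereas f(a) = e = f(b) with e in the common
   part C. *)

Lemma chain_op_images_neq {U : Type} (A B : Tsubmodel U) (D : Tmodel)
    (g h : U -> D) (a b c : U) :
  embedding A D g -> embedding B D h ->
  dom A a -> dom A c -> dom B c -> dom B b ->
  srel A a c -> srel B c b -> ~ srel A c a ->
  g c = h c -> g (sop A a) <> h (sop B b).
Proof.
  intros [_ [g_rel g_op]] [_ [h_rel h_op]] Aa Ac Bc Bb ac cb not_ca gc_hc.
  assert (ga_gc : rel D (g a) (g c)) by (apply g_rel; assumption).
  assert (gc_hb : rel D (g c) (h b)) by (rewrite gc_hc; apply h_rel; assumption).
  assert (ga_hb_neq : g a <> h b).
  { intro ga_hb. apply not_ca, g_rel; [assumption | assumption |].
    rewrite ga_hb. exact gc_hb. }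
  destruct (op_strict D _ _ (rel_trans D _ _ _ ga_gc gc_hb) ga_hb_neq)
    as [_ op_neq].
  rewrite g_op, h_op by assumption.
  exact op_neq.
Qed.

Inductive point := pa | pb | pc | pe | pk.

Definition fP (x : point) : point :=
  match x with pa | pb | pk => pe | pc | pe => pk end.

Definition rC (x y : point) : bool :=
  match x, y with
  | pa, pa | pb, pb | pc, pc | pe, pe | pk, pk | pe, pk | pk, pe => true
  | _, _ => false
  end.
Definition rA (x y : point) : bool :=
  match x, y with pa, pc => true | _, _ => rC x y end.
Definition rB (x y : point) : bool :=
  match x, y with pc, pb => true | _, _ => rC x y end.

Definition dC (x : point) : bool := match x with pc | pe | pk => true | _ => false end.
Definition dA (x : point) : bool := match x with pb => false | _ => true end.
Definition dB (x : point) : bool := match x with pa => false | _ => true end.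

Ltac finite_check :=
  intros;
  repeat match goal with x : point |- _ => destruct x end;
  simpl in *; try discriminate; try reflexivity;
  try (exfalso; congruence);
  try (split; [reflexivity | discriminate]).

Definition MC : Tsubmodel point.
Proof.
  refine {| dom := fun x => dC x = true; srel := fun x y => rC x y = true;
            sop := fP |}; finite_check.
Defined.

Definition MA : Tsubmodel point.
Proof.
  refine {| dom := fun x => dA x = true; srel := fun x y => rA x y = true;
            sop := fP |}; finite_check.
Defined.

Definition MB : Tsubmodel point.
Proof.
  refine {| dom := fun x => dB x = true; srel := fun x y => rB x y = true;
            sop := fP |}; finite_check.
Defined.

Lemma MC_sub_MA : substructure MC MA.
Proof. split; [|split]; simpl; finite_check; split; finite_check. Qed.

Lemma MC_sub_MB : substructure MC MB.
Proof. split; [|split]; simpl; finite_check; split; finite_check. Qed.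

Lemma dom_MC_inter x : dom MC x <-> (dom MA x /\ dom MB x).
Proof. destruct x; simpl; intuition discriminate. Qed.

Theorem proposition4p2 : ~ amalgamation_property.
Proof.
  intro AP.
  destruct (AP point MA MB MC MC_sub_MA MC_sub_MB dom_MC_inter)
    as [D [g [h [g_emb [h_emb gh_agree]]]]].
  apply (chain_op_images_neq MA MB D g h pa pb pc g_emb h_emb);
    try reflexivity; try discriminate.
  - apply gh_agree; reflexivity.
  - apply (gh_agree pe); reflexivity.
Qed.
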